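(* Let $G$ be an Abelian group and $(\rho,V)$ a linear representation of $G$ on a finite-dimensional vector space $V$ over a field $k$. Let $A$ be a nonempty finite subset of $G$ and $Y\subset V$ with $\langle Y\rangle\neq\{0\}$ and $\dim(A\cdot Y)\leq\alpha\dim Y$ for some $\alpha\in\mathbb{R}_{\geq0}$. Then there exists a $k$-subspace $Z\neq\{0\}$ of $\langle Y\rangle$ such that $\dim(A^{n}\cdot Z)\leq\alpha^{n}\dim Z$ for every integer $n\geq1$.
   Context: $g\cdot v=\rho(g)v$; $\langle Y\rangle$ is the $k$-span of $Y$ and $\dim Y:=\dim\langle Y\rangle$; for $S\subset G$, $S\cdot Z$ is the $k$-span of $\{s\cdot z\mid s\in S,z\in Z\}$; $A^n=\{a_1\cdots a_n\mid a_i\in A\}$. *)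

From HB Require Import structures.
From mathcomp Require Import all_boot all_order all_algebra.
From mathcomp Require Import Rstruct.
From Stdlib Require Import ClassicalEpsilon.
Set Implicit Arguments. Unset Strict Implicit. Unset Printing Implicit Defensive.
Import Order.TTheory GRing.Theory Num.Theory.
Local Open Scope ring_scope.

Section Defs.
Variables (k : fieldType) (vT : vectType k).

Definition is_span (Y : vT -> Prop) (W : {vspace vT}) : Prop :=
  (forall y, Y y -> y \in W) /\
  (forall U : {vspace vT}, (forall y, Y y -> y \in U) -> (W <= U)%VS).

(* <Y> : the k-span of Y (it exists and is unique since vT is finite-dim.) *)
Definition span_of (Y : vT -> Prop) : {vspace vT} :=
  epsilon (inhabits 0%VS) (is_span Y).

Definition dim_of (Y : vT -> Prop) : nat := \dim (span_of Y).

Definition vset (Z : {vspace vT}) : vT -> Prop := fun v => v \in Z.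

Variable G : zmodType.

Definition is_rep (rho : G -> 'End(vT)) : Prop :=
  rho 0 = \1%VF /\ forall g h, rho (g + h) = (rho g \o rho h)%VF.

Definition act_span (rho : G -> 'End(vT)) (S : G -> Prop) (Z : vT -> Prop)
  : {vspace vT} :=
  span_of (fun v => exists s z, S s /\ Z z /\ v = rho s z).

(* A^n = { a_1 + ... + a_n | a_i in A } (group law of G written additively) *)
Definition pow_set (A : seq G) (n : nat) : G -> Prop :=
  fun g => exists s : seq G, size s = n /\ all (fun a => a \in A) s /\
                             g = \sum_(a <- s) a.

End Defs.

(** Petridis' argument, transported from sumsets to subspaces.  Choose a
    nonzero subspace [Z] of [<Y>] minimising [dim (A.Z) / dim Z]; this ratio
    is at most [alpha].  Minimality makes [dim (A.(C.Z)) / dim (C.Z)] at most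
    that ratio for every finite [C] (induction on [C], comparing with the
    subspace of those [z] in [Z] whose image [A.(x.z)] is already in
    [A.(C.Z)]), and taking [C = A^n] gives the powers. *)

From HB Require Import structures.
From mathcomp Require Import all_boot all_order all_algebra.
From mathcomp Require Import Rstruct.
From Stdlib Require Import Classical ClassicalEpsilon.
From mathcomp Require Import zify.
Import Order.TTheory GRing.Theory Num.Theory.
Local Open Scope ring_scope.
Set Implicit Arguments. Unset Strict Implicit. Unset Printing Implicit Defensive.

Lemma ex_minimizer {T : Type} {P : T -> Prop} (f : T -> nat) :
  (exists x, P x) -> exists2 x, P x & forall y, P y -> (f x <= f y)%N.
Proof.
move=> [x0 Px0]; have [n lex0] : exists n, (f x0 <= n)%N by exists (f x0).
elim: n x0 Px0 lex0 => [|n IH] x Px lex.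
  by exists x => // y _; move: lex; rewrite leqn0 => /eqP ->.
case: (classic (exists2 y, P y & (f y < f x)%N)) => [[y Py lt_yx]|no_less].
  by apply: (IH y) => //; lia.
by exists x => // y Py; rewrite leqNgt; apply/negP => lt_yx; apply: no_less; exists y.
Qed.

(* [num x * (D %/ den x)] with [D = N`!] is [D] times the ratio
   [num x / den x], so a minimiser of it minimises that ratio. *)
Lemma ex_min_ratio (T : Type) (P : T -> Prop) (num den : T -> nat) (N : nat) :
  (forall x, P x -> 0 < den x <= N)%N -> (exists x, P x) ->
  exists2 x, P x & forall y, P y -> (num x * den y <= den x * num y)%N.
Proof.
move=> den_bound exP; set D := N`!.
have [x Px xmin] := ex_minimizer (fun x => num x * (D %/ den x))%N exP.
have denK y : P y -> (D %/ den y * den y = D)%N.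
  by move=> /den_bound /andP [den_gt0 den_le]; rewrite divnK // dvdn_fact ?den_gt0.
exists x => // y Py; rewrite -(leq_pmul2r (fact_gt0 N)) -/D.
have := leq_mul (xmin y Py) (leqnn (den x * den y)).
have := denK x Px; have := denK y Py.
move: (D %/ den x)%N (D %/ den y)%N => u v Dy Dx.
by rewrite -{1}Dx -Dy; lia.
Qed.

Lemma ler_nat_ratio_pow (R : realFieldType) (alpha : R) (m p q n : nat) :
  (0 < q)%N -> p%:R <= alpha * q%:R -> (m * q ^ n <= p ^ n * q)%N ->
  m%:R <= alpha ^+ n * q%:R.
Proof.
move=> q_gt0 p_le mq_le; have qR_gt0 : 0 < q%:R :> R by rewrite ltr0n.
rewrite -(ler_pM2r (exprn_gt0 n qR_gt0)); apply: le_trans (_ : p%:R ^+ n * q%:R <= _).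
  by rewrite -!natrX -!natrM ler_nat.
rewrite mulrAC -exprMn ler_wpM2r ?(ltW qR_gt0) //; apply: lerXn2r; rewrite ?nnegrE //.
exact: le_trans p_le.
Qed.

Section Span.
Variables (k : fieldType) (vT : vectType k).

Lemma span_of_spec (Y : vT -> Prop) : is_span Y (span_of Y).
Proof.
apply: epsilon_spec.
have [W Y_W Wmin] := ex_minimizer (fun W : {vspace vT} => \dim W)
  (ex_intro (fun W : {vspace vT} => forall y, Y y -> y \in W) fullv (fun y _ => memvf y)).
exists W; split=> // U Y_U; apply/capv_idPl/eqP.
rewrite eqEdim capvSl Wmin // => y Yy.
by rewrite memv_cap Y_W ?Y_U.
Qed.

Lemma span_of_mem (Y : vT -> Prop) y : Y y -> y \in span_of Y.
Proof. exact: (span_of_spec Y).1. Qed.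

Lemma span_of_min (Y : vT -> Prop) (U : {vspace vT}) :
  (forall y, Y y -> y \in U) -> (span_of Y <= U)%VS.
Proof. exact: (span_of_spec Y).2. Qed.

Lemma span_ofE (Y : vT -> Prop) W : is_span Y W -> span_of Y = W.
Proof.
move=> [Y_W Wmin]; apply/eqP.
by rewrite eqEsubv span_of_min // Wmin //; apply: span_of_mem.
Qed.

Lemma span_vset (Z : {vspace vT}) : span_of (vset Z) = Z.
Proof. by apply: span_ofE; split=> // U /subvP. Qed.

Lemma memv_bigcap (I : Type) (r : seq I) (Us : I -> {vspace vT}) v :
  (v \in \bigcap_(i <- r) Us i)%VS = all (fun i => v \in Us i) r.
Proof.
by elim: r => [|i r IH]; rewrite ?big_nil ?memvf // big_cons memv_cap IH.
Qed.

End Span.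

Fixpoint powseq (G : zmodType) (A : seq G) (n : nat) : seq G :=
  if n is n'.+1 then [seq a + b | a <- A, b <- powseq A n'] else [:: 0].

Lemma pow_setP (G : zmodType) (A : seq G) n g : pow_set A n g <-> g \in powseq A n.
Proof.
elim: n g => [|n IH] g /=.
  split=> [[s [/size0nil -> [_ ->]]]|]; first by rewrite big_nil inE.
  by rewrite inE => /eqP ->; exists [::]; rewrite big_nil.
split=> [[[|a s] [//= [size_s] [/andP [aA sA] ->]]]|].
  by rewrite big_cons; apply: allpairs_f => //; apply/IH; exists s.
move=> /allpairsP [[a b] /= [aA /IH [s [size_s [sA ->]]] ->]].
by exists (a :: s); rewrite /= size_s aA sA big_cons.
Qed.

Section Action.
Variables (k : fieldType) (vT : vectType k) (G : zmodType) (rho : G -> 'End(vT)).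

Definition actv (C : seq G) (U : {vspace vT}) : {vspace vT} :=
  (\sum_(c <- C) rho c @: U)%VS.

Lemma actv_nil U : actv [::] U = 0%VS.
Proof. by rewrite /actv big_nil. Qed.

Lemma actv_cons c C U : actv (c :: C) U = (rho c @: U + actv C U)%VS.
Proof. by rewrite /actv big_cons. Qed.

Lemma actv_sup c C U : c \in C -> (rho c @: U <= actv C U)%VS.
Proof. by move=> cC; rewrite /actv (big_rem c cC) addvSl. Qed.

Lemma actv_sub C U V :
  (forall c, c \in C -> (rho c @: U <= V)%VS) -> (actv C U <= V)%VS.
Proof.
move=> CU_V; rewrite /actv big_seq.
by elim/big_ind: _ => [|W W' WV W'V|c /CU_V]; rewrite ?sub0v ?subv_add ?WV.
Qed.

Lemma actvS C U V : (U <= V)%VS -> (actv C U <= actv C V)%VS.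
Proof.
by move=> UV; apply: actv_sub => c cC; apply: subv_trans (limgS _ UV) (actv_sup _ cC).
Qed.

Lemma actv0 C : actv C 0 = 0%VS.
Proof. by apply/eqP; rewrite -subv0; apply: actv_sub => c _; rewrite limg0. Qed.

Lemma actvD C U V : actv C (U + V) = (actv C U + actv C V)%VS.
Proof.
elim: C => [|c C IH]; first by rewrite !actv_nil addv0.
by rewrite !actv_cons IH limgD; apply: Monoid.mulmACA.
Qed.

Lemma act_span_seqE (S : G -> Prop) (C : seq G) (Y : vT -> Prop) :
  (forall s, S s <-> s \in C) -> act_span rho S Y = actv C (span_of Y).
Proof.
move=> SC; apply: span_ofE; split.
  move=> _ [s [y [/SC sC [Yy ->]]]].
  by apply: (subvP (actv_sup _ sC)); rewrite memv_img ?span_of_mem.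
move=> U SY_U; apply: actv_sub => c cC; apply/subvP => _ /memv_imgP [y Yy ->].
rewrite memv_preim; move: y Yy; apply/subvP/span_of_min => y Yy.
by rewrite -memv_preim; apply: SY_U; exists c, y; rewrite SC.
Qed.

Definition expansion_minimal (A : seq G) (Z : {vspace vT}) : Prop :=
  forall Z', (Z' <= Z)%VS -> (\dim (actv A Z) * \dim Z' <= \dim Z * \dim (actv A Z'))%N.

Hypothesis rhoP : is_rep rho.

Lemma rep_comm a b : (rho a \o rho b = rho b \o rho a)%VF.
Proof. by case: rhoP => _ rhoD; rewrite -!rhoD addrC. Qed.

Lemma dim_rep_img x U : \dim (rho x @: U) = \dim U.
Proof.
apply: limg_dim_eq; apply/eqP; rewrite -subv0; apply/subvP => u.
rewrite memv_cap memv_ker memv0 => /andP [_ /eqP rho_u].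
case: rhoP => rho0 rhoD.
have -> : u = rho (- x + x) u by rewrite addNr rho0 id_lfunE.
by rewrite rhoD comp_lfunE rho_u linear0.
Qed.

Lemma actv_img C x U : actv C (rho x @: U) = (rho x @: actv C U)%VS.
Proof.
elim: C => [|c C IH]; first by rewrite !actv_nil limg0.
by rewrite !actv_cons IH limgD -!limg_comp rep_comm.
Qed.

Lemma actv_powseq0 A U : actv (powseq A 0) U = U.
Proof. by rewrite /= actv_cons actv_nil addv0; case: rhoP => -> _; rewrite lim1g. Qed.

Lemma actv_powseqS A n U : actv (powseq A n.+1) U = actv A (actv (powseq A n) U).
Proof.
rewrite /= /actv big_allpairs_dep; apply: eq_bigr => a _.
by rewrite limg_sum; apply: eq_bigr => b _; case: rhoP => _ ->; rewrite limg_comp.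
Qed.

Section Petridis.
Variables (A : seq G) (Z : {vspace vT}).
Hypothesis Zmin : expansion_minimal A Z.

Lemma petridis C :
  (\dim Z * \dim (actv A (actv C Z)) <= \dim (actv A Z) * \dim (actv C Z))%N.
Proof.
elim: C => [|x C IH]; first by rewrite actv_nil actv0 dimv0 muln0.
set W := actv A (actv C Z).
set Z' := (Z :&: rho x @^-1: \bigcap_(a <- A) rho a @^-1: W)%VS.
have memZ' z : z \in Z -> (z \in Z') = all (fun a => rho a (rho x z) \in W) A.
  move=> Zz; rewrite memv_cap Zz -memv_preim memv_bigcap.
  by under eq_all do rewrite -memv_preim.
have AxZ'_sub : (actv A (rho x @: Z') <= actv A (rho x @: Z) :&: W)%VS.
  rewrite subv_cap actvS ?limgS ?capvSl //=.
  apply: actv_sub => a aA; apply/subvP => _ /memv_imgP [_ /memv_imgP [z Z'z ->] ->].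
  have Zz : z \in Z by move: Z'z; rewrite memv_cap => /andP [].
  by move: Z'z; rewrite memZ' // => /allP; apply.
have xZ_cap_sub : (rho x @: Z :&: actv C Z <= rho x @: Z')%VS.
  apply/subvP => v; rewrite memv_cap => /andP [/memv_imgP [z Zz ->] xz_CZ].
  rewrite memv_img // memZ' //; apply/allP => a aA.
  by apply: (subvP (actv_sup _ aA)); rewrite memv_img.
(* With [p := dim (A.Z)], modularity of [dim] gives
   [dim (A.((x :: C).Z)) <= p + dim W - dim (A.Z')] and
   [dim Z' >= dim Z + dim (C.Z) - dim ((x :: C).Z)]; minimality bounds
   [dim (A.Z')] below by [p * dim Z' / dim Z]. *)
have := dimvS AxZ'_sub; have := dimvS xZ_cap_sub.
have := dimv_sum_cap (actv A (rho x @: Z)) W.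
have := dimv_sum_cap (rho x @: Z) (actv C Z).
have := Zmin (capvSl Z _ : (Z' <= Z)%VS).
rewrite actv_cons actvD !actv_img !dim_rep_img; move: IH; rewrite -/W.
nia.
Qed.

Lemma dim_actv_powseq_le n :
  (\dim (actv (powseq A n) Z) * \dim Z ^ n <= \dim (actv A Z) ^ n * \dim Z)%N.
Proof.
elim: n => [|n IH]; first by rewrite actv_powseq0 expn0 muln1 mul1n.
rewrite actv_powseqS !expnS.
have := leq_mul (petridis (powseq A n)) (leqnn (\dim Z ^ n)).
have := leq_mul (leqnn (\dim (actv A Z))) IH.
nia.
Qed.

End Petridis.

End Action.

Theorem mainTheorem19 (k : fieldType) (vT : vectType k) (G : zmodType)
  (rho : G -> 'End(vT)) (A : seq G) (Y : vT -> Prop) (alpha : Rdefinitions.R) :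
  is_rep rho -> A != [::] ->
  span_of Y != 0%VS ->
  0 <= alpha ->
  ((\dim (act_span rho (fun a => a \in A) Y))%:R <= alpha * (dim_of Y)%:R) ->
  exists Z : {vspace vT},
    Z != 0%VS /\ (Z <= span_of Y)%VS /\
    forall n : nat, (1 <= n)%N ->
      (\dim (act_span rho (pow_set A n) (vset Z)))%:R <= alpha ^+ n * (\dim Z)%:R.
Proof.
move=> rhoP _ S_neq0 _; rewrite (act_span_seqE _ _ (fun a => iff_refl _)) /dim_of.
set S := span_of Y => AS_le.
have dim_bound (Z : {vspace vT}) :
    Z != 0%VS -> (0 < \dim Z <= \dim (fullv : {vspace vT}))%N.
  by move=> Z0; rewrite lt0n dimv_eq0 Z0 dimvS ?subvf.
have [Z [ZS Z_neq0] Zmin] := ex_min_ratio (P := fun Z => (Z <= S)%VS /\ Z != 0%VS)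
  (fun Z => \dim (actv rho A Z)) (fun Z '(conj _ Z0) => dim_bound Z Z0)
  (ex_intro _ S (conj (subvv S) S_neq0)).
have {}Zmin Z' : (Z' <= S)%VS ->
    (\dim (actv rho A Z) * \dim Z' <= \dim Z * \dim (actv rho A Z'))%N.
  by case: (eqVneq Z' 0%VS) => [-> _|Z'0 Z'S]; [rewrite dimv0 muln0 | apply: Zmin].
have AZ_le : (\dim (actv rho A Z))%:R <= alpha * (\dim Z)%:R.
  have S_gt0 : 0 < (\dim S)%:R :> Rdefinitions.R by rewrite ltr0n lt0n dimv_eq0.
  rewrite -(ler_pM2r S_gt0) -mulrA mulrCA; apply: le_trans (ler_wpM2l (ler0n _ _) AS_le).
  by rewrite -!natrM ler_nat; apply: Zmin.
exists Z; split=> //; split=> // n _.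
rewrite (act_span_seqE _ _ (pow_setP A n)) span_vset.
have Z_gt0 : (0 < \dim Z)%N by rewrite lt0n dimv_eq0.
apply: (ler_nat_ratio_pow Z_gt0 AZ_le); apply: (dim_actv_powseq_le rhoP) => Z' Z'Z.
exact: Zmin (subv_trans Z'Z ZS).
Qed.
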